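(* Let $X$ be a compact metrizable space, let $F_1^\bullet,\dots,F_N^\bullet$ be open subsets of $X$, and let $F_i^\circ\subset F_i^\bullet$ be open subsets with $\overline{F_i^\circ}\subset F_i^\bullet$ and $X=\bigcup_{i=1}^NF_i^\circ$. Let $\mathcal{I}$ be the set of nonempty subsets of $\{1,\dots,N\}$, partially ordered by inclusion, and order its elements as $I_1,\dots,I_M$ so that $I_k\subseteq I_l$ implies $k\le l$. For each $i$ choose open sets $$F_i^\circ=:G_i^1\sqsubset F_i^1\sqsubset G_i^2\sqsubset F_i^2\sqsubset\cdots\sqsubset G_i^M\sqsubset F_i^M:=F_i^\bullet,$$ where $A\sqsubset B$ means $\overline{A}\subset B$. For $I_k\in\mathcal{I}$ define $$F_{I_k}^\square:=\Big(\bigcap_{i\in I_k}F_i^k\Big)\setminus\Big(\bigcup_{i\notin I_k}\overline{G_i^k}\Big).$$ Then for all $I,J\in\mathcal{I}$, $\overline{F_I^\square}\cap\overline{F_J^\square}\ne\emptyset$ implies $I\subseteq J$ or $J\subseteq I$.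
   Context: All closures are taken in $X$. *)

From HB Require Import structures.
From mathcomp Require Import all_boot all_order all_algebra.
From mathcomp Require Import all_classical all_reals all_analysis.
Set Implicit Arguments. Unset Strict Implicit. Unset Printing Implicit Defensive.
Import Order.TTheory GRing.Theory Num.Theory.
Local Open Scope classical_set_scope.

Definition csub {X : topologicalType} (A B : set X) : Prop := closure A `<=` B.

(* F^square_{I_k} := (\bigcap_{i in I_k} F_i^k) \ (\bigcup_{i notin I_k} closure G_i^k),
   where the index k : 'I_M is 0-based and e k = I_k. *)
Definition Fsquare {X : topologicalType} {N M : nat}
  (e : 'I_M -> {set 'I_N}) (F G : 'I_N -> 'I_M -> set X) (k : 'I_M) : set X :=
  (\bigcap_(i in [set i | i \in e k]) F i k) `\`
  (\bigcup_(i in [set i | i \notin e k]) closure (G i k)).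

From HB Require Import structures.
From mathcomp Require Import all_boot all_order all_algebra.
From mathcomp Require Import all_classical all_reals all_analysis.
Local Open Scope classical_set_scope.

(* Suppose x lies in the closures of F^square_{I_k} and F^square_{I_l} with
   k < l, and some i lies in I_k but not in I_l.  Then x is in the closure of
   F_i^k, which the chain G_i^k ⊏ F_i^k ⊏ G_i^{k+1} ⊏ ... places inside the open
   set G_i^l; but F^square_{I_l} avoids G_i^l, so x cannot be in its closure. *)

Section NestedChain.

Context {X : topologicalType} {N M : nat} {F G : 'I_N -> 'I_M -> set X}.

Hypothesis G_csub_F : forall i k, csub (G i k) (F i k).
Hypothesis F_csub_Gsucc :
  forall i (k k' : 'I_M), val k' = (val k).+1 -> csub (F i k) (G i k').

Lemma closure_F_subset_G i {k l : 'I_M} :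
  (k < l)%N -> closure (F i k) `<=` G i l.
Proof.
move=> lt_kl; have [n def_l] : exists n, val l = (k.+1 + n)%N.
  by exists (l - k.+1)%N; rewrite subnKC.
elim: n l def_l {lt_kl} => [|n IHn] l' def_l'.
  by apply: F_csub_Gsucc; rewrite def_l' addn0.
have lt_nM : (k.+1 + n < M)%N.
  by have := ltn_ord l'; rewrite def_l' addnS; apply: ltnW.
have G_sub_Gsucc : G i (Ordinal lt_nM) `<=` G i l'.
  move=> y /subset_closure/G_csub_F/subset_closure.
  by apply: F_csub_Gsucc; rewrite def_l' addnS.
by move=> y /(IHn (Ordinal lt_nM) erefl); apply: G_sub_Gsucc.
Qed.

Variable e : 'I_M -> {set 'I_N}.

Lemma closure_Fsquare_subset_closure_F {i k} :
  i \in e k -> closure (Fsquare e F G k) `<=` closure (F i k).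
Proof. by move=> ik; apply: closureS => y [Fy _]; apply: Fy. Qed.

Lemma Fsquare_disjoint_G {i k} : i \notin e k -> Fsquare e F G k `&` G i k = set0.
Proof.
move=> ik; apply/disjoints_subset => y [_ notGy] Gy.
by apply: notGy; exists i => //; apply: subset_closure.
Qed.

Hypothesis G_open : forall i k, open (G i k).

Lemma closure_Fsquare_meet_subset (k l : 'I_M) : (k < l)%N ->
  closure (Fsquare e F G k) `&` closure (Fsquare e F G l) !=set0 ->
  e k \subset e l.
Proof.
move=> lt_kl [x [Fk_x Fl_x]]; apply/fintype.subsetP => i ik; apply: contraT => il.
have Gx : G i l x.
  by apply: (closure_F_subset_G i lt_kl); apply: (closure_Fsquare_subset_closure_F ik).
have [y] := Fl_x _ (open_nbhs_nbhs (conj (G_open i l) Gx)).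
by rewrite (Fsquare_disjoint_G il).
Qed.

End NestedChain.

Theorem lemma11p5 (R : realType) (X : pseudoMetricType R)
  (N M : nat) (Fcirc Fbullet : 'I_N -> set X)
  (e : 'I_M -> {set 'I_N}) (F G : 'I_N -> 'I_M -> set X) :
  hausdorff_space X ->
  compact [set: X] ->
  (forall i, open (Fbullet i)) ->
  (forall i, open (Fcirc i)) ->
  (forall i, Fcirc i `<=` Fbullet i) ->
  (forall i, closure (Fcirc i) `<=` Fbullet i) ->
  [set: X] = \bigcup_(i in [set: 'I_N]) Fcirc i ->
  (* e enumerates the nonempty subsets of {1..N} compatibly with inclusion *)
  injective e ->
  (forall k, e k != finset.set0) ->
  (forall I : {set 'I_N}, I != finset.set0 -> exists k, e k = I) ->
  (forall k l : 'I_M, e k \subset e l -> (k <= l)%N) ->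
  (* the chain F_i^circ = G_i^1 ⊏ F_i^1 ⊏ G_i^2 ⊏ ... ⊏ G_i^M ⊏ F_i^M = F_i^bullet *)
  (forall i k, open (G i k)) ->
  (forall i k, open (F i k)) ->
  (forall i (k : 'I_M), val k = 0%N -> G i k = Fcirc i) ->
  (forall i (k : 'I_M), val k = M.-1 -> F i k = Fbullet i) ->
  (forall i k, csub (G i k) (F i k)) ->
  (forall i (k k' : 'I_M), val k' = (val k).+1 -> csub (F i k) (G i k')) ->
  forall k l : 'I_M,
    closure (Fsquare e F G k) `&` closure (Fsquare e F G l) !=set0 ->
    e k \subset e l \/ e l \subset e k.
Proof.
move=> _ _ _ _ _ _ _ _ _ _ _ G_open _ _ _ G_csub_F F_csub_Gsucc k l meet.
have meet_subset := closure_Fsquare_meet_subset G_csub_F F_csub_Gsucc e G_open.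
case: (ltngtP k l) => [lt_kl | lt_lk | eq_kl].
- by left; apply: meet_subset.
- by right; apply: meet_subset; first exact: lt_lk; rewrite setIC.
- by left; rewrite (val_inj eq_kl).
Qed.
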